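(* Let $G \in \mathcal{C}_3$ be a digraph with at least one arc. Then in every $\vec{\chi}(G)$-dicolouring of $G$ there is at least one monochromatic arc, i.e. an arc both of whose endpoints lie in the same colour class.
   Context: All digraphs are finite and simple: no loops, no multiple arcs, and for two distinct vertices $u,v$ at most one of the arcs $uv$, $vu$ is present. A $k$-dicolouring of a digraph $D$ is a partition of $V(D)$ into $k$ sets $V_1,\dots,V_k$ (some possibly empty) such that each induced subdigraph $D[V_i]$ is acyclic (contains no directed cycle). The dichromatic number $\vec{\chi}(D)$ is the smallest $k$ such that $D$ admits a $k$-dicolouring. $TT_3$ denotes the transitive tournament on 3 vertices (a triangle oriented acyclically); a directed triangle is a directed cycle of length 3. $\mathcal{C}_3$ is the class of digraphs that contain no $TT_3$ as a subdigraph and contain no induced directed cycle of length at least $4$. *)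

From mathcomp Require Import all_boot.
Set Implicit Arguments. Unset Strict Implicit. Unset Printing Implicit Defensive.

Definition simple_digraph (V : finType) (arc : rel V) : Prop :=
  (forall v, ~~ arc v v) /\ (forall u v, arc u v -> ~~ arc v u).

Definition dicycle (V : finType) (arc : rel V) (s : seq V) : Prop :=
  [/\ 2 <= size s, uniq s & cycle arc s].

Definition acyclic_on (V : finType) (arc : rel V) (A : {set V}) : Prop :=
  forall s, dicycle arc s -> ~ {subset s <= A}.

Definition dicolouring (V : finType) (arc : rel V) (k : nat) (f : V -> 'I_k) : Prop :=
  forall i : 'I_k, acyclic_on arc [set v | f v == i].

Definition dichromatic_number (V : finType) (arc : rel V) (k : nat) : Prop :=
  (exists f : V -> 'I_k, dicolouring arc f) /\
  (forall k', k' < k -> forall f : V -> 'I_k', ~ dicolouring arc f).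

Definition has_TT3 (V : finType) (arc : rel V) : Prop :=
  exists a b c : V, [/\ arc a b, arc b c & arc a c].

Definition induced_dicycle (V : finType) (arc : rel V) (s : seq V) : Prop :=
  dicycle arc s /\
  (forall u v, u \in s -> v \in s -> arc u v -> v = next s u).

Definition in_C3 (V : finType) (arc : rel V) : Prop :=
  ~ has_TT3 arc /\
  (forall s, 4 <= size s -> ~ induced_dicycle arc s).

From mathcomp Require Import all_boot zify.
Set Implicit Arguments. Unset Strict Implicit.

(* Suppose a dicolouring f with dichromatic-number many colours has no
   monochromatic arc, i.e. f is a proper colouring.  The union of two colour
   classes is then acyclic: any directed cycle in it contains an induced one,
   which has length at least 4 because a digon contradicts simplicity and a
   directed triangle needs three colours; such induced cycles are excluded in
   C3.  Merging two colours thus gives a dicolouring with fewer colours. *)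

Section InducedDicycles.

Variables (V : finType) (arc : rel V).
Hypothesis arc_irrefl : forall v, ~~ arc v v.

(* Rotate [s] to [u :: w :: r1 ++ v :: r2]; the chord [u -> v] closes the
   shorter cycle [v :: r2 ++ [:: u]]. *)
Lemma dicycle_chord_shorten s u v :
  dicycle arc s -> u \in s -> v \in s -> arc u v -> v != next s u ->
  exists t, [/\ dicycle arc t, {subset t <= s} & size t < size s].
Proof.
case=> size_s uniq_s cycle_s s_u s_v uv v_not_next.
have [i s' def_s] := rot_to s_u.
have uniq_s' : uniq (u :: s') by rewrite -def_s rot_uniq.
have cycle_s' : cycle arc (u :: s') by rewrite -def_s rot_cycle.
have mem_s' x : (x \in u :: s') = (x \in s) by rewrite -def_s mem_rot.
have next_s' : next (u :: s') u = next s u by rewrite -def_s (next_rot _ uniq_s).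
have size_s' : size (u :: s') = size s by rewrite -def_s size_rot.
case: s' def_s uniq_s' cycle_s' mem_s' next_s' size_s' => [|w r] _ uniq_s' cycle_s'
    mem_s' next_s' size_s'; first by rewrite -size_s' in size_s.
have v_neq_u : v != u by apply: contraTneq uv => ->.
have v_neq_w : v != w.
  by apply: contraNneq v_not_next => ->; rewrite -next_s' /= eqxx.
have r_v : v \in r by move: s_v; rewrite -mem_s' !inE (negbTE v_neq_u) (negbTE v_neq_w).
case/splitPr: r_v uniq_s' cycle_s' mem_s' size_s' => r1 r2 uniq_s' cycle_s' mem_s' size_s'.
exists (v :: rcons r2 u); split.
- split; first by rewrite /= size_rcons.
    move: uniq_s'; rewrite /= rcons_uniq !cat_uniq /= !mem_cat !inE !negb_or.
    move=> /andP[/andP[_]]; rewrite mem_cat inE !negb_or.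
    move=> /and3P[_ _ u_r2] /and5P[_ _ _ v_r2 uniq_r2].
    by rewrite mem_rcons inE negb_or v_neq_u v_r2 u_r2 uniq_r2.
  move: cycle_s'; rewrite /= rcons_path cat_path last_cat /=.
  move=> /and3P[_ /andP[_ /andP[_ path_r2]] last_r2].
  by rewrite rcons_path rcons_path path_r2 last_r2 last_rcons uv.
- move=> x; rewrite -mem_s' !inE mem_rcons !inE mem_cat !inE.
  by case/orP=> [->|/orP[]->]; rewrite ?orbT.
- by rewrite -size_s' /= size_rcons size_cat /=; lia.
Qed.

Lemma dicycle_induced_sub s :
  dicycle arc s -> exists2 t, induced_dicycle arc t & {subset t <= s}.
Proof.
have [n] := ubnP (size s); elim: n s => // n IHs s /ltnSE size_s cycle_s.
have [induced_s | ] := boolP [forall u, forall v,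
    [&& u \in s, v \in s & arc u v] ==> (v == next s u)].
  exists s => //; split=> // u v s_u s_v uv; apply/eqP.
  by move/forallP/(_ u)/forallP/(_ v): induced_s; rewrite s_u s_v uv.
rewrite negb_forall => /existsP[u]; rewrite negb_forall => /existsP[v].
rewrite negb_imply => /andP[/and3P[s_u s_v uv] v_not_next].
have [t [cycle_t sub_ts size_ts]] := dicycle_chord_shorten cycle_s s_u s_v uv v_not_next.
have [t' induced_t' sub_t't] := IHs t (leq_trans size_ts size_s) cycle_t.
by exists t' => // x /sub_t't /sub_ts.
Qed.

End InducedDicycles.

Lemma acyclic_on_subset (V : finType) (arc : rel V) (A B : {set V}) :
  B \subset A -> acyclic_on arc A -> acyclic_on arc B.
Proof. by move=> /subsetP sub_BA acyclic_A s cycle_s /(_ _ _)/sub_BA; apply: acyclic_A. Qed.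

Section TwoColouredCycles.

Variables (V : finType) (arc : rel V) (T : eqType) (f : V -> T).
Hypothesis arc_simple : simple_digraph arc.
Hypothesis f_proper : forall u v, arc u v -> f u != f v.

(* A cycle of length 2 is excluded by asymmetry, one of length 3 would need
   three pairwise distinct colours. *)
Lemma two_coloured_dicycle_size (a b : T) s :
  dicycle arc s -> {subset s <= [pred x | f x \in [:: a; b]]} -> 4 <= size s.
Proof.
case: arc_simple => _ arc_asym [+ _ +] s_ab.
case: s s_ab => [|x [|y [|z [|? ?]]]] //= s_ab _.
  by rewrite andbT => /andP[xy yx]; move: (arc_asym _ _ xy); rewrite yx.
rewrite andbT => /and3P[/f_proper fxy /f_proper fyz /f_proper fzx].
move: (s_ab x) (s_ab y) (s_ab z); rewrite !inE !eqxx ?orbT.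
by move=> /(_ isT)/orP[]/eqP-fx /(_ isT)/orP[]/eqP-fy /(_ isT)/orP[]/eqP-fz;
  move: fxy fyz fzx; rewrite fx fy fz ?eqxx.
Qed.

Lemma C3_two_colour_classes_acyclic (a b : T) :
  in_C3 arc -> acyclic_on arc [set v | f v \in [:: a; b]].
Proof.
case=> _ no_long_induced s cycle_s s_ab.
have [irrefl _] := arc_simple.
have [t induced_t sub_ts] := dicycle_induced_sub irrefl cycle_s.
apply: (no_long_induced t _ induced_t).
apply: (two_coloured_dicycle_size (a := a) (b := b) induced_t.1).
by move=> x /sub_ts /s_ab; rewrite inE.
Qed.

End TwoColouredCycles.

(* [inord (minn (f v) k)] merges the colours [k] and [k.+1] of [f]. *)
Lemma C3_proper_colouring_merge (V : finType) (arc : rel V) (k : nat)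
    (f : V -> 'I_k.+2) :
  simple_digraph arc -> in_C3 arc -> (forall u v, arc u v -> f u != f v) ->
  dicolouring arc (fun v => inord (minn (f v) k) : 'I_k.+1).
Proof.
move=> arc_simple arc_C3 f_proper c.
apply: acyclic_on_subset (C3_two_colour_classes_acyclic arc_simple f_proper
  (a := widen_ord (leqnSn _) c) (b := ord_max) arc_C3).
apply/subsetP => v; rewrite !inE => /eqP <-.
rewrite -!(inj_eq val_inj) /= inordK ?ltnS ?geq_minr //.
case: (leqP k (f v)) => [k_le_fv | _]; last by rewrite eqxx.
by have := ltn_ord (f v); lia.
Qed.

Theorem mainTheorem2 (V : finType) (arc : rel V) :
  simple_digraph arc ->
  in_C3 arc ->
  (exists u v, arc u v) ->
  forall (k : nat), dichromatic_number arc k ->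
  forall f : V -> 'I_k, dicolouring arc f ->
  exists u v, arc u v /\ f u = f v.
Proof.
move=> arc_simple arc_C3 [u0 [v0 uv0]] k [_ k_min] f _.
have [/existsP[u /existsP[v /andP[uv /eqP fuv]]] | no_mono] :=
  boolP [exists u, exists v, arc u v && (f u == f v)]; first by exists u, v.
have f_proper u v : arc u v -> f u != f v.
  move=> uv; apply: contraNN no_mono => fuv.
  by apply/existsP; exists u; apply/existsP; exists v; rewrite uv.
case: k k_min f f_proper {no_mono} => [|[|k]] k_min f f_proper.
- by case: (f u0).
- by move: (f_proper _ _ uv0); rewrite (ord1 (f u0)) (ord1 (f v0)).
- by case: (k_min k.+1 (ltnSn _) _ (C3_proper_colouring_merge arc_simple arc_C3 f_proper)).
Qed.
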